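(* Let $m\in\mathbb{Z}_2$ with $v_2(m)$ odd, and $f(x)=x^2+(-1-4m)x$ on $\mathbb{Z}_2$. Then $f$ has the two fixed points $0$ and $4m+2$, $f(1+2\mathbb{Z}_2)\subset 2\mathbb{Z}_2$, and $$2\mathbb{Z}_2=\{0,4m+2\}\sqcup E_1\sqcup E_2\sqcup E_3,$$ where $$E_1=\bigsqcup_{n\ge4}\big(4m+2+2^{n-2}+2^{n-1}\mathbb{Z}_2\big)-\{\text{II-}[1]\},$$ $$E_2=\bigsqcup_{4\le n\le\lfloor v_2(m)/2\rfloor+3}\big(2^{n-2}+2^{n-1}\mathbb{Z}_2\big)-\{\text{II-}[2n-5]\},$$ $$E_3=\bigsqcup_{n>\lfloor v_2(m)/2\rfloor+3}\big(2^{n-2}+2^{n-1}\mathbb{Z}_2\big)-\{\text{II-}[v_2(m)+1]\}.$$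
   Context: $v_2$ is the $2$-adic valuation. For $n\ge1$, $f_n$ is the induced map on $\mathbb{Z}/2^n\mathbb{Z}$, $f_n(x\bmod 2^n)=f(x)\bmod 2^n$. A cycle of $f_n$ (at level $n$) of length $k$ is a tuple $\sigma=(x_1,\dots,x_k)$ of distinct elements with $f_n(x_i)=x_{i+1}$, $f_n(x_k)=x_1$. The set $X_\sigma=\{y\in\mathbb{Z}/2^{n+1}\mathbb{Z}:y\bmod 2^n\in\sigma\}$ is $f_{n+1}$-invariant; its cycles are the lifts of $\sigma$. $\sigma$ grows if $X_\sigma$ is a single cycle of length $2k$ and splits if it is a union of two cycles of length $k$. For $k\ge0$, ''$\sigma$ splits $k$ times and then its lifts grow forever'' means every cycle at levels $n,\dots,n+k-1$ lying above $\sigma$ (reducing mod $2^n$ into $\sigma$) splits, and every cycle at every level $\ge n+k$ lying above $\sigma$ grows. A set $F=(x+2^n\mathbb{Z}_2)\cup(y+2^n\mathbb{Z}_2)$ with $(x\bmod 2^n,y\bmod 2^n)$ a 2-cycle of $f_n$ is of type II-$[k]$ if this 2-cycle splits $k$ times and then its lifts grow forever (then $F$ is the disjoint union of $2^k$ clopen invariant sets, each a union of two balls of radius $2^{-n-k}$, on each of which $f$ is minimal). The notation $E=\bigsqcup_{n\in J}F_n-\{\text{II-}[k]\}$ means $E$ is the disjoint union of the sets $F_n$, each of type II-$[k]$ (with $k$ possibly depending on $n$ as indicated). *)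

From mathcomp Require Import all_boot all_order.
Set Implicit Arguments.
Unset Strict Implicit.
Unset Printing Implicit Defensive.

(* The 2-adic integers Z_2, as the inverse limit of the rings Z/2^k Z:      *)
(* an element x is the compatible sequence of its canonical residues        *)
(* res x k = (x mod 2^k) in [0, 2^k).                                       *)
Record Z2 := MkZ2 {
  res : nat -> nat ;
  res_lt : forall k, res k < 2 ^ k ;
  res_compat : forall k, res k.+1 = res k %[mod 2 ^ k] }.

Lemma modn_pow2S a k : a %% 2 ^ k.+1 %% 2 ^ k = a %% 2 ^ k.
Proof. by rewrite modn_dvdm // expnS dvdn_mull. Qed.

Definition normZ2 (g : nat -> nat) (H : forall k, g k.+1 = g k %[mod 2 ^ k]) : Z2.
Proof.
refine (@MkZ2 (fun k => g k %% 2 ^ k) _ _).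
- by move=> k; rewrite ltn_pmod // expn_gt0.
- by move=> k /=; rewrite modn_pow2S modn_mod H.
Defined.

Lemma Z2c_compat (a : nat) : forall k, a = a %[mod 2 ^ k].
Proof. by []. Qed.

Definition Z2c (a : nat) : Z2 := normZ2 (Z2c_compat a).

Lemma Z2add_compat (x y : Z2) :
  forall k, res x k.+1 + res y k.+1 = res x k + res y k %[mod 2 ^ k].
Proof. by move=> k; rewrite -modnDm (res_compat x) (res_compat y) modnDm. Qed.

Definition Z2add (x y : Z2) : Z2 := normZ2 (Z2add_compat x y).

Lemma Z2mul_compat (x y : Z2) :
  forall k, res x k.+1 * res y k.+1 = res x k * res y k %[mod 2 ^ k].
Proof. by move=> k; rewrite -modnMm (res_compat x) (res_compat y) modnMm. Qed.

Definition Z2mul (x y : Z2) : Z2 := normZ2 (Z2mul_compat x y).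

Lemma Z2opp_compat (x : Z2) :
  forall k, 2 ^ k.+1 - res x k.+1 = 2 ^ k - res x k %[mod 2 ^ k].
Proof.
move=> k; apply/eqP; rewrite -(eqn_modDl (res x k.+1)).
rewrite subnKC; last exact: ltnW (res_lt x k.+1).
rewrite -modnDml (res_compat x) modnDml subnKC; last exact: ltnW (res_lt x k).
by rewrite expnS modnMl modnn.
Qed.

Definition Z2opp (x : Z2) : Z2 := normZ2 (Z2opp_compat x).

(* x \in a + 2^n Z_2, i.e. x = a mod 2^n *)
Definition ball (a : Z2) (n : nat) (x : Z2) : Prop := res x n = res a n.

Definition v2_is (x : Z2) (v : nat) : Prop :=
  ball (Z2c 0) v x /\ ~ ball (Z2c 0) v.+1 x.

(* Induced maps on Z/2^n Z (represented by 'I_(2^n)):                       *)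
(* f_n (x mod 2^n) = f(x) mod 2^n, computed on the lift x = i in Z_2.       *)
Definition fn (f : Z2 -> Z2) (n : nat) (i : 'I_(2 ^ n)) : 'I_(2 ^ n) :=
  Ordinal (res_lt (f (Z2c i)) n).
Arguments fn : clear implicits.

Definition is_cycle (T : finType) (g : T -> T) (C : {set T}) (k : nat) : Prop :=
  exists x : T, [/\ 0 < k, iter k g x = x,
                    C = [set iter (nat_of_ord j) g x | j : 'I_k] & #|C| = k].

Definition above (n l : nat) (sigma : {set 'I_(2 ^ n)}) : {set 'I_(2 ^ l)} :=
  [set y : 'I_(2 ^ l) | [exists x in sigma, nat_of_ord x == y %% 2 ^ n]].
Arguments above : clear implicits.

Definition grows (f : Z2 -> Z2) (n k : nat) (sigma : {set 'I_(2 ^ n)}) : Prop :=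
  is_cycle (fn f n.+1) (above n n.+1 sigma) (2 * k).

Arguments grows : clear implicits.

Definition splits (f : Z2 -> Z2) (n k : nat) (sigma : {set 'I_(2 ^ n)}) : Prop :=
  exists C1 C2 : {set 'I_(2 ^ n.+1)},
    [/\ is_cycle (fn f n.+1) C1 k, is_cycle (fn f n.+1) C2 k,
        [disjoint C1 & C2] & above n n.+1 sigma = C1 :|: C2].

Arguments splits : clear implicits.

Definition splits_then_grows (f : Z2 -> Z2) (n s : nat) (sigma : {set 'I_(2 ^ n)})
  : Prop :=
  forall (l : nat) (C : {set 'I_(2 ^ l)}) (k : nat),
    n <= l -> is_cycle (fn f l) C k -> C \subset above n l sigma ->
    (l < n + s -> splits f l k C) /\ (n + s <= l -> grows f l k C).

Arguments splits_then_grows : clear implicits.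

Definition typeII (f : Z2 -> Z2) (s : nat) (F : Z2 -> Prop) : Prop :=
  exists (n : nat) (x y : Z2),
    (forall z, F z <-> ball x n z \/ ball y n z) /\
    let a : 'I_(2 ^ n) := Ordinal (res_lt x n) in
    let b : 'I_(2 ^ n) := Ordinal (res_lt y n) in
    is_cycle (fn f n) [set a; b] 2 /\ splits_then_grows f n s [set a; b].

Definition fm (m : Z2) (x : Z2) : Z2 :=
  Z2add (Z2mul x x) (Z2mul (Z2add (Z2opp (Z2c 1)) (Z2opp (Z2mul (Z2c 4) m))) x).

From mathcomp Require Import all_boot all_order all_algebra.
From mathcomp Require Import zify ring.
From Stdlib Require Import FunctionalExtensionality ProofIrrelevance Classical.
Import GRing.Theory Num.Theory.
Set Implicit Arguments.
Unset Strict Implicit.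
Unset Printing Implicit Defensive.
Local Open Scope ring_scope.

(* Work with integer representatives modulo 2^l.  On the piece of level n,
   f moves every point by exactly 2^(n-1), while f∘f is 2-adically analytic
   with derivative ≡ 1 mod 4 and moves every point by exactly 2^e, where
   e = n + 1 near 4m+2 and e = min (3n - 5, n + v + 1) near 0 (the minimum is
   attained only once because v is odd).  Squaring such a map raises the
   exact shift by one, so modulo 2^l all orbits on the piece have period
   exactly 2 * 2^(l-e): the 2-cycle at level n splits e - n times and its
   lifts grow afterwards.  The partition of 2Z_2 is the classification of
   even x by the exact valuation of x (when >= 2) or of x - (4m+2). *)

(** * 2-adic valuations of integers *)

Definition v2z_is (a : int) (k : nat) := exists q : int, a = (2 * q + 1) * 2 ^+ k.

Lemma dvdz_pow2W j k a : (2 ^+ k %| a)%Z -> (j <= k)%N -> (2 ^+ j %| a)%Z.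
Proof. by move=> ka /(dvdz_exp2l 2) /dvdz_trans; apply. Qed.

Lemma dvdz_pow2M j k a b :
  (2 ^+ j %| a)%Z -> (2 ^+ k %| b)%Z -> (2 ^+ (j + k) %| a * b)%Z.
Proof. by rewrite exprD; apply: dvdz_mul. Qed.

Lemma v2z_dvdz a k : v2z_is a k -> (2 ^+ k %| a)%Z.
Proof. by move=> [q ->]; apply: dvdz_mull. Qed.

Lemma v2z_ndvdz a k : v2z_is a k -> ~ (2 ^+ k.+1 %| a)%Z.
Proof.
move=> [q ->] /dvdzP [r]; rewrite exprS mulrA => /(mulIf (expf_neq0 k (isT : 2 != 0 :> int))).
lia.
Qed.

Lemma v2z_ndvdzW a j k : v2z_is a k -> (k < j)%N -> ~ (2 ^+ j %| a)%Z.
Proof. by move=> ha hkj ja; apply: v2z_ndvdz ha _; apply: dvdz_pow2W ja hkj. Qed.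

Lemma v2zP a k : (2 ^+ k %| a)%Z -> ~ (2 ^+ k.+1 %| a)%Z -> v2z_is a k.
Proof.
move=> /dvdzP [q ->] hn; have := divz_eq q 2; have := modz_ge0 q (isT : 2 != 0 :> int).
have := ltz_pmod q (isT : 0 < 2 :> int); set r := (q %/ 2)%Z => hlt hge hq.
have [e0 | e1] : (q %% 2)%Z = 0 \/ (q %% 2)%Z = 1 by lia.
  by case: hn; apply/dvdzP; exists r; rewrite hq e0 exprS; ring.
by exists r; rewrite hq e1; ring.
Qed.

Lemma v2z_pow2 k : v2z_is (2 ^+ k) k.
Proof. by exists 0; ring. Qed.

Lemma v2zM a b j k : v2z_is a j -> v2z_is b k -> v2z_is (a * b) (j + k).
Proof. by move=> [q ->] [r ->]; exists (2 * q * r + q + r); rewrite exprD; ring. Qed.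

Lemma v2zN a k : v2z_is a k -> v2z_is (- a) k.
Proof. by move=> [q ->]; exists (- q - 1); ring. Qed.

Lemma v2zDr a b k : v2z_is a k -> (2 ^+ k.+1 %| b)%Z -> v2z_is (a + b) k.
Proof. by move=> [q ->] /dvdzP [r ->]; exists (q + r); rewrite exprS; ring. Qed.

Lemma v2zDl a b k : (2 ^+ k.+1 %| a)%Z -> v2z_is b k -> v2z_is (a + b) k.
Proof. by rewrite addrC => ha hb; apply: v2zDr. Qed.

(** * Maps with an exact shift *)

Definition taylor_on (S : int -> Prop) (H D : int -> int) :=
  forall Y d k, S Y -> (2 ^+ k %| d)%Z -> (2 ^+ (k + k) %| H (Y + d) - H Y - D Y * d)%Z.

Definition exact_shift (S : int -> Prop) (H D : int -> int) (w : nat) :=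
  [/\ {homo H : Y / S Y}, taylor_on S H D, (forall Y, S Y -> (4 %| D Y - 1)%Z),
      (forall Y, S Y -> v2z_is (H Y - Y) w) & (2 <= w)%N].

Lemma taylor_on_iter2 S H D : {homo H : Y / S Y} -> taylor_on S H D ->
  taylor_on S (iter 2 H) (fun Y => D (H Y) * D Y).
Proof.
move=> HS HT Y d k SY kd /=.
have err1 := HT Y d k SY kd.
have kdH : (2 ^+ k %| H (Y + d) - H Y)%Z.
  have -> : H (Y + d) - H Y = (H (Y + d) - H Y - D Y * d) + D Y * d by ring.
  apply: rpredD => /=; last exact: dvdz_mull.
  by apply: (dvdz_pow2W err1); rewrite leq_addr.
have err2 := HT (H Y) _ k (HS _ SY) kdH.
rewrite subrKC in err2.
have -> : H (H (Y + d)) - H (H Y) - D (H Y) * D Y * d =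
    (H (H (Y + d)) - H (H Y) - D (H Y) * (H (Y + d) - H Y))
      + D (H Y) * (H (Y + d) - H Y - D Y * d) by ring.
by apply: rpredD => //=; apply: dvdz_mull.
Qed.

(* [H^2 Y - Y = (H Y - Y) (1 + D Y) + O(2^(2w))] and [1 + D Y] has valuation 1. *)
Lemma exact_shift_iter2 S H D w : exact_shift S H D w ->
  exact_shift S (iter 2 H) (fun Y => D (H Y) * D Y) w.+1.
Proof.
case=> HS HT HD Hw w2; split => //.
- by move=> Y SY; apply/HS/HS.
- exact: taylor_on_iter2.
- move=> Y SY; have /dvdzP [a Ea] := HD _ (HS _ SY); have /dvdzP [b Eb] := HD _ SY.
  apply/dvdzP; exists (a * b * 4 + a + b).
  by rewrite -(subrK 1 (D (H Y))) -(subrK 1 (D Y)) Ea Eb; ring.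
- move=> Y SY /=.
  have err := HT Y (H Y - Y) w SY (v2z_dvdz (Hw _ SY)).
  rewrite subrKC in err.
  have /dvdzP [a Ea] := HD _ SY.
  have -> : H (H Y) - Y = (H (H Y) - H Y - D Y * (H Y - Y))
                          + (H Y - Y) * ((2 * a + 1) * 2 ^+ 1).
    by rewrite -(subrK 1 (D Y)) Ea; ring.
  apply: v2zDl; first by apply: (dvdz_pow2W err); lia.
  rewrite -[w.+1]addn1; apply: v2zM; first exact: Hw.
  by exists a.
- exact: leqW.
Qed.

Lemma dvdz_iter_sub S H w : {homo H : Y / S Y} ->
  (forall Y, S Y -> (2 ^+ w %| H Y - Y)%Z) ->
  forall a Y, S Y -> (2 ^+ w %| iter a H Y - Y)%Z.
Proof.
move=> HS Hw a Y SY; elim: a => [|a IH] /=; first by rewrite subrr dvdz0.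
have -> : H (iter a H Y) - Y = (H (iter a H Y) - iter a H Y) + (iter a H Y - Y) by ring.
apply: rpredD => //=.
by apply: Hw; elim: a {IH} => //= a; apply: HS.
Qed.

Lemma exact_shift_iter_pow2 u S H D w : exact_shift S H D w ->
  forall Y, S Y -> v2z_is (iter (2 ^ u) H Y - Y) (w + u).
Proof.
elim: u S H D w => [|u IH] S H D w Hs Y SY.
  by rewrite addn0; case: Hs => _ _ _ + _; apply.
by rewrite expnSr iterM addnS -addSn; apply: IH (exact_shift_iter2 Hs) _ SY.
Qed.

Lemma exact_shift_aperiodic u S H D w : exact_shift S H D w ->
  forall Y h, S Y -> (0 < h < 2 ^ u)%N -> ~ (2 ^+ (w + u) %| iter h H Y - Y)%Z.
Proof.
elim: u S H D w => [|u IH] S H D w Hs Y h SY hh; first by rewrite expn0 in hh; lia.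
have Hs2 := exact_shift_iter2 Hs; have [HS _ _ Hw _] := Hs.
have h2 := odd_double_half h; rewrite -muln2 in h2.
case: (odd h) h2 => /= h2; rewrite -{}h2 in hh *.
- rewrite iterSr iterM.
  set X := iter _ _ _; have -> : X - Y = (X - H Y) + (H Y - Y) by ring.
  apply: (v2z_ndvdzW (k := w)); last lia.
  apply: v2zDl; last exact: Hw.
  apply: (dvdz_iter_sub (S := S)) => //; first by move=> Z SZ; apply/HS/HS.
    by move=> Z SZ; have [_ _ _ Hw2 _] := Hs2; exact: v2z_dvdz (Hw2 _ SZ).
  exact: HS.
- rewrite iterM addnS -addSn; apply: IH Hs2 _ _ SY _.
  by rewrite expnS in hh; lia.
Qed.

Lemma exact_period S F D e w0 l Y :
  {homo F : Y / S Y} -> exact_shift S (iter 2 F) D e ->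
  (forall Y, S Y -> v2z_is (F Y - Y) w0) -> (w0 < e)%N -> (w0 < l)%N -> S Y ->
  (2 ^+ l %| iter (2 ^ (l - e) * 2) F Y - Y)%Z /\
  (forall k, (0 < k < 2 ^ (l - e) * 2)%N -> ~ (2 ^+ l %| iter k F Y - Y)%Z).
Proof.
move=> FS Fs Fw0 w0e w0l SY.
split.
  rewrite iterM; apply: (dvdz_pow2W (v2z_dvdz (exact_shift_iter_pow2 _ Fs SY))).
  by lia.
move=> k hk; have k2 := odd_double_half k; rewrite -muln2 in k2.
case: (odd k) k2 => /= k2; rewrite -{}k2 in hk *.
- rewrite iterSr iterM.
  set X := iter _ _ _; have -> : X - Y = (X - F Y) + (F Y - Y) by ring.
  apply: (v2z_ndvdzW (k := w0)) => //.
  apply: v2zDl; last exact: Fw0.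
  apply: (dvdz_pow2W _ w0e); apply: (dvdz_iter_sub (S := S)) (FS _ SY).
    by move=> Z SZ; apply/FS/FS.
  by move=> Z SZ; have [_ _ _ Fw _] := Fs; exact: v2z_dvdz (Fw _ SZ).
- rewrite iterM.
  have le_el : (e <= l)%N.
    by case: leqP => // /ltnW; rewrite -subn_eq0 => /eqP E; move: hk; rewrite E; lia.
  have := exact_shift_aperiodic Fs SY (h := k./2) (u := l - e).
  rewrite subnKC //; apply; lia.
Qed.

(** * The integer model of f *)

Definition fz (M Y : int) := Y * (Y - (1 + 4 * M)).
Definition dfz (M Y : int) := 2 * Y - (1 + 4 * M).
Definition dfz2 (M Y : int) := dfz M (fz M Y) * dfz M Y.
Definition pz (M : int) := 4 * M + 2.

Lemma fz_taylor M S : taylor_on S (fz M) (dfz M).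
Proof.
move=> Y d k _ kd; have -> : fz M (Y + d) - fz M Y - dfz M Y * d = d * d.
  by rewrite /fz /dfz; ring.
exact: dvdz_pow2M.
Qed.

Lemma fz_sub M Y : fz M Y - Y = Y * (Y - pz M).
Proof. by rewrite /fz /pz; ring. Qed.

Lemma fz_iter2_sub M Y :
  iter 2 (fz M) Y - Y = Y * (Y - pz M) * (Y * Y - 4 * M * Y - 4 * M).
Proof. by rewrite /= /fz /pz; ring. Qed.

Lemma exact_shift_fz M S e : {homo fz M : Y / S Y} -> (forall Y, S Y -> (2 %| Y)%Z) ->
  (forall Y, S Y -> v2z_is (iter 2 (fz M) Y - Y) e) -> (2 <= e)%N ->
  exact_shift S (iter 2 (fz M)) (dfz2 M) e.
Proof.
move=> fS S2 Se e2; split => //.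
- by move=> Y SY; apply/fS/fS.
- exact: taylor_on_iter2 fS (@fz_taylor M S).
- move=> Y SY; have /dvdzP [a Ea] := S2 _ (fS _ SY); have /dvdzP [b Eb] := S2 _ SY.
  apply/dvdzP; exists (4 * a * b - a * (1 + 4 * M) - b * (1 + 4 * M) + 2 * M + 4 * M * M).
  by rewrite /dfz2 /dfz Ea Eb; ring.
Qed.

Section Shifts.
Variables (M : int) (v j : nat).
Hypotheses (vM : v2z_is M v) (odd_v : odd v) (j2 : (2 <= j)%N).

Lemma v2z_sub_pz Y : (2 ^+ 2 %| Y)%Z -> v2z_is (Y - pz M) 1.
Proof.
move=> /dvdzP [q ->]; exists (q - M - 1); rewrite /pz; ring.
Qed.

Lemma v2z_fz_near_0 Y : v2z_is Y j -> v2z_is (fz M Y) j.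
Proof.
move=> vY; rewrite /fz -[j]addn0; apply: v2zM => //.
have /dvdzP [q Eq] := dvdz_pow2W (j := 1) (v2z_dvdz vY) (ltnW j2).
by exists (q - 2 * M - 1); rewrite Eq; ring.
Qed.

(* The valuation of [Y^2 - 4 M Y - 4 M] is [2j] or [v + 2], whichever is
   smaller; they differ because [v] is odd. *)
Lemma fz_shift_near_0 :
  [/\ {homo fz M : Y / v2z_is Y j},
      exact_shift (v2z_is^~ j) (iter 2 (fz M)) (dfz2 M)
        (if (j + j < v + 2)%N then 3 * j + 1 else j + v + 3)%N &
      forall Y, v2z_is Y j -> v2z_is (fz M Y - Y) j.+1].
Proof.
have Y4 Y : v2z_is Y j -> (2 ^+ 2 %| Y)%Z by move=> /v2z_dvdz /dvdz_pow2W; apply.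
have shift1 Y : v2z_is Y j -> v2z_is (Y * (Y - pz M)) (j + 1).
  by move=> vY; apply: v2zM => //; apply: v2z_sub_pz; apply: Y4.
have v4M : v2z_is (4 * M) (2 + v) by apply: v2zM => //; exists 0; ring.
split => //; first exact: v2z_fz_near_0.
- apply: exact_shift_fz; first exact: v2z_fz_near_0.
  + by move=> Y /Y4 /dvdz_pow2W /(_ (isT : (1 <= 2)%N)); rewrite expr1.
  + move=> Y vY; rewrite fz_iter2_sub.
    have vYY : v2z_is (Y * Y) (j + j) by apply: v2zM.
    have d4MY : (2 ^+ (2 + v + j) %| 4 * M * Y)%Z.
      exact: dvdz_pow2M (v2z_dvdz v4M) (v2z_dvdz vY).
    case: ifP => hjv.
    * rewrite (_ : 3 * j + 1 = (j + 1) + (j + j))%N; last lia.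
      apply: v2zM; first exact: shift1.
      rewrite -addrA; apply: v2zDr => //; apply: rpredB => /=; rewrite ?rpredN.
        by apply: (dvdz_pow2W d4MY); lia.
      by apply: (dvdz_pow2W (v2z_dvdz v4M)); lia.
    * have hne : (j + j != v + 2)%N.
        by apply/eqP => E; have := odd_double j; rewrite -addnn E addn2 /= odd_v.
      rewrite (_ : j + v + 3 = (j + 1) + (2 + v))%N; last lia.
      apply: v2zM; first exact: shift1.
      apply: v2zDl; last exact: v2zN.
      apply: rpredB => /=; first by apply: (dvdz_pow2W (v2z_dvdz vYY)); lia.
      by apply: (dvdz_pow2W d4MY); lia.
  + by case: ifP; lia.
- by move=> Y vY; rewrite fz_sub -addn1; apply: shift1.
Qed.

Lemma fz_shift_near_p :
  [/\ {homo fz M : Y / v2z_is (Y - pz M) j},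
      exact_shift (fun Y => v2z_is (Y - pz M) j) (iter 2 (fz M)) (dfz2 M) (j + 3) &
      forall Y, v2z_is (Y - pz M) j -> v2z_is (fz M Y - Y) j.+1].
Proof.
have Z4 Y : v2z_is (Y - pz M) j -> (2 ^+ 2 %| Y - pz M)%Z by move=> /v2z_dvdz /dvdz_pow2W; apply.
have vY Y : v2z_is (Y - pz M) j -> v2z_is Y 1.
  move=> /Z4 /dvdzP [q Eq]; exists (q + M).
  by rewrite -(subrK (pz M) Y) Eq /pz; ring.
have /dvdzP [M2 EM] : (2 ^+ 1 %| M)%Z.
  by apply: (dvdz_pow2W (v2z_dvdz vM)); case: v odd_v.
have fS : {homo fz M : Y / v2z_is (Y - pz M) j}.
  move=> Y hY; rewrite (_ : fz M Y - pz M = (Y - pz M) * (Y + 1)); last by rewrite /fz /pz; ring.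
  rewrite -[j]addn0; apply: v2zM => //.
  by have [q Eq] := vY _ hY; exists (2 * q + 1); rewrite Eq; ring.
split => //.
- apply: exact_shift_fz => //; last lia.
  + by move=> Y /vY /v2z_dvdz; rewrite expr1.
  + move=> Y hY; rewrite fz_iter2_sub (_ : j + 3 = (1 + j) + 2)%N; last lia.
    apply: v2zM; first by apply: v2zM => //; apply: vY.
    set Z := Y - pz M.
    rewrite (_ : _ - _ - _ = 4 * (M + 1) + (Z * Z + 4 * (M + 1) * Z)); last by rewrite /Z /pz; ring.
    apply: v2zDr; first by rewrite EM; exists M2; ring.
    have jZ : (2 ^+ j %| Z)%Z by apply: v2z_dvdz.
    apply: rpredD => /=; first by apply: (dvdz_pow2W (dvdz_pow2M jZ jZ)); lia.
    apply: (dvdz_pow2W (dvdz_pow2M (j := 2) _ jZ)); last lia.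
    by apply/dvdzP; exists (M + 1); ring.
- by move=> Y hY; rewrite fz_sub -add1n; apply: v2zM => //; apply: vY.
Qed.

End Shifts.

(** * Integer representatives of 2-adic integers *)

Lemma natz_pow2 k : ((2 ^ k)%N : int) = 2 ^+ k.
Proof. by rewrite -natz natrX. Qed.

Lemma Z2_ext x y : (forall k, res x k = res y k) -> x = y.
Proof.
case: x y => rx lx cx [ry ly cy] /= h.
have E : rx = ry by apply: functional_extensionality.
by subst ry; f_equal; apply: proof_irrelevance.
Qed.

Lemma res_Z2c a k : res (Z2c a) k = (a %% 2 ^ k)%N.
Proof. by []. Qed.

Lemma res_Z2c_ord l (i : 'I_(2 ^ l)) : res (Z2c i) l = i.
Proof. by rewrite res_Z2c modn_small. Qed.

Lemma res_low x j k : (j <= k)%N -> res x j = (res x k %% 2 ^ j)%N.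
Proof.
move=> /subnKC <-; elim: (k - j)%N => [|t IH]; first by rewrite addn0 modn_small ?res_lt.
have dvd_jt : (2 ^ j %| 2 ^ (j + t))%N by apply: dvdn_exp2l; rewrite leq_addr.
by rewrite addnS -(modn_dvdm _ dvd_jt) (res_compat x) modn_dvdm // -IH.
Qed.

Lemma ball_low c k j x : ball c k x -> (j <= k)%N -> ball c j x.
Proof. by rewrite /ball => e jk; rewrite (res_low x jk) (res_low c jk) e. Qed.

Lemma dvdz_modn_sub k n : (2 ^+ k %| (n %% 2 ^ k)%N%:Z - n%:Z)%Z.
Proof.
apply/dvdzP; exists (- (n %/ 2 ^ k)%N%:Z).
by rewrite {2}(divn_eq n (2 ^ k)) PoszD PoszM natz_pow2; ring.
Qed.

Lemma dvdz_pow2_small k a b : (a < 2 ^ k)%N -> (b < 2 ^ k)%N ->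
  (2 ^+ k %| a%:Z - b%:Z)%Z -> a = b.
Proof.
move=> ak bk /dvdzP [q Eq]; have lt_ak : a%:Z < 2 ^+ k by rewrite -natz_pow2 ltz_nat.
have lt_bk : b%:Z < 2 ^+ k by rewrite -natz_pow2 ltz_nat.
have gt0 : 0 < 2 ^+ k :> int by rewrite exprn_gt0.
move: Eq lt_ak lt_bk gt0; move: (2 ^+ k : int) => N Eq lt_ak lt_bk gt0.
have q0 : q = 0 by nia.
by move: Eq; rewrite q0 mul0r; lia.
Qed.

Definition rep k (x : Z2) (X : int) := (2 ^+ k %| (res x k)%:Z - X)%Z.

Lemma rep_res k x : rep k x (res x k).
Proof. by rewrite /rep subrr dvdz0. Qed.

Lemma rep_Z2c k a : rep k (Z2c a) a%:Z.
Proof. exact: dvdz_modn_sub. Qed.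

Lemma rep_dvdz k x X Y : rep k x X -> rep k x Y -> (2 ^+ k %| X - Y)%Z.
Proof.
move=> xX xY; have -> : X - Y = ((res x k)%:Z - Y) - ((res x k)%:Z - X) by ring.
exact: rpredB.
Qed.

Lemma rep_congr k x X Y : rep k x X -> (2 ^+ k %| X - Y)%Z -> rep k x Y.
Proof.
move=> xX XY; rewrite /rep; have -> : (res x k)%:Z - Y = ((res x k)%:Z - X) + (X - Y) by ring.
exact: rpredD.
Qed.

Lemma rep_res_eq k x y X : rep k x X -> rep k y X -> res x k = res y k.
Proof.
move=> xX yX; apply: dvdz_pow2_small; try exact: res_lt.
have -> : (res x k)%:Z - (res y k)%:Z = ((res x k)%:Z - X) - ((res y k)%:Z - X) by ring.
exact: rpredB.
Qed.

Lemma ball_rep k c x C X : rep k c C -> rep k x X -> ball c k x <-> (2 ^+ k %| X - C)%Z.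
Proof.
move=> cC xX; split => [E | XC].
  by apply: rep_dvdz xX _; rewrite /rep E.
by apply: (rep_res_eq xX); apply: rep_congr cC _; rewrite -opprB rpredN.
Qed.

Lemma rep_low j k x X : rep k x X -> (j <= k)%N -> rep j x X.
Proof.
move=> xX jk; rewrite /rep (res_low x jk).
have -> : (res x k %% 2 ^ j)%N%:Z - X =
   ((res x k %% 2 ^ j)%N%:Z - (res x k)%:Z) + ((res x k)%:Z - X) by ring.
by apply: rpredD => /=; [apply: dvdz_modn_sub | apply: (dvdz_pow2W xX)].
Qed.

Lemma rep_add k x y X Y : rep k x X -> rep k y Y -> rep k (Z2add x y) (X + Y).
Proof.
move=> xX yY; rewrite /rep /=.
have -> : ((res x k + res y k) %% 2 ^ k)%N%:Z - (X + Y) =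
  (((res x k + res y k) %% 2 ^ k)%N%:Z - (res x k + res y k)%N%:Z)
  + ((res x k)%:Z - X) + ((res y k)%:Z - Y) by rewrite PoszD; ring.
by apply: rpredD => //=; apply: rpredD => //=; apply: dvdz_modn_sub.
Qed.

Lemma rep_mul k x y X Y : rep k x X -> rep k y Y -> rep k (Z2mul x y) (X * Y).
Proof.
move=> xX yY; rewrite /rep /=.
have -> : ((res x k * res y k) %% 2 ^ k)%N%:Z - X * Y =
  (((res x k * res y k) %% 2 ^ k)%N%:Z - (res x k * res y k)%N%:Z)
  + ((res x k)%:Z - X) * (res y k)%:Z + X * ((res y k)%:Z - Y) by rewrite PoszM; ring.
apply: rpredD => /=; last exact: dvdz_mull.
by apply: rpredD => /=; [apply: dvdz_modn_sub | apply: dvdz_mulr].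
Qed.

Lemma rep_opp k x X : rep k x X -> rep k (Z2opp x) (- X).
Proof.
move=> xX; rewrite /rep /=.
have le_xk : (res x k <= 2 ^ k)%N by apply/ltnW/res_lt.
have := dvdz_modn_sub k (2 ^ k - res x k).
rewrite -subzn // natz_pow2; move: ((2 ^ k - res x k) %% 2 ^ k)%N => t kt.
have -> : t%:Z - - X = (t%:Z - (2 ^+ k - (res x k)%:Z)) + 2 ^+ k - ((res x k)%:Z - X) by ring.
by apply: rpredB => //=; apply: rpredD => //=; apply: dvdzz.
Qed.

Lemma rep_fm k m x M X : rep k m M -> rep k x X -> rep k (fm m x) (fz M X).
Proof.
move=> mM xX; rewrite /fm.
have := rep_add (rep_mul xX xX)
  (rep_mul (rep_add (rep_opp (rep_Z2c k 1)) (rep_opp (rep_mul (rep_Z2c k 4) mM))) xX).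
by move/rep_congr; apply; rewrite /fz (_ : _ - _ = 0) ?dvdz0 //; ring.
Qed.

Lemma rep_iter_fm k m x M X n : rep k m M -> rep k x X ->
  rep k (iter n (fm m) x) (iter n (fz M) X).
Proof. by move=> mM xX; elim: n => [|n IH] //=; apply: rep_fm. Qed.

Lemma fm_res m x y l : res x l = res y l -> res (fm m x) l = res (fm m y) l.
Proof.
move=> E; apply: (rep_res_eq (rep_fm (rep_res l m) (rep_res l x))).
by apply: rep_fm (rep_res l m) _; rewrite /rep E subrr dvdz0.
Qed.

(** * Cycles of the induced maps *)

Lemma two_lifts l A B Y : (A < 2 ^ l.+1)%N -> (B < 2 ^ l.+1)%N -> (Y < 2 ^ l.+1)%N ->
  (A %% 2 ^ l = B %% 2 ^ l)%N -> (Y %% 2 ^ l = A %% 2 ^ l)%N -> A <> B -> Y = A \/ Y = B.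
Proof.
rewrite expnS => lt_A lt_B lt_Y AB YA.
have gt0 : (0 < 2 ^ l)%N by rewrite expn_gt0.
have qA : (A %/ 2 ^ l < 2)%N by rewrite ltn_divLR // mulnC.
have qB : (B %/ 2 ^ l < 2)%N by rewrite ltn_divLR // mulnC.
have qY : (Y %/ 2 ^ l < 2)%N by rewrite ltn_divLR // mulnC.
have := divn_eq A (2 ^ l); have := divn_eq B (2 ^ l); have := divn_eq Y (2 ^ l).
move: qA qB qY AB YA; move: (A %/ 2 ^ l)%N (B %/ 2 ^ l)%N (Y %/ 2 ^ l)%N.
by move=> [|[|?]] [|[|?]] [|[|?]] //=; lia.
Qed.

Lemma iter_modn (T : Type) (g : T -> T) k y j :
  iter k g y = y -> iter j g y = iter (j %% k) g y.
Proof.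
move=> gky; rewrite {1}(divn_eq j k) addnC iterD; congr iter.
by elim: (j %/ k)%N => [|q IH] //; rewrite mulSn iterD IH.
Qed.

Lemma lift_lo_subproof l (y : 'I_(2 ^ l)) : (y < 2 ^ l.+1)%N.
Proof. by rewrite expnS; have := ltn_ord y; lia. Qed.

Lemma lift_hi_subproof l (y : 'I_(2 ^ l)) : (y + 2 ^ l < 2 ^ l.+1)%N.
Proof. by rewrite expnS; have := ltn_ord y; lia. Qed.

Definition lift_lo l (y : 'I_(2 ^ l)) : 'I_(2 ^ l.+1) := Ordinal (lift_lo_subproof y).
Definition lift_hi l (y : 'I_(2 ^ l)) : 'I_(2 ^ l.+1) := Ordinal (lift_hi_subproof y).

Lemma lift_lo_mod l (y : 'I_(2 ^ l)) : (lift_lo y %% 2 ^ l)%N = y.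
Proof. by rewrite /= modn_small. Qed.

Lemma lift_hi_mod l (y : 'I_(2 ^ l)) : (lift_hi y %% 2 ^ l)%N = y.
Proof. by rewrite /= modnDr modn_small. Qed.

Lemma lift_lo_hi_neq l (y : 'I_(2 ^ l)) : lift_lo y <> lift_hi y.
Proof. by move/(congr1 val) => /=; have := expn_gt0 2 l; lia. Qed.

Section ExactPeriods.
Variables (f : Z2 -> Z2) (c0 : Z2) (n s : nat).

Local Notation Per l := (2 ^ (l - (n + s)) * 2)%N.
Local Notation B := (ball c0 (n - 1)).

Hypothesis f_res : forall x y l, res x l = res y l -> res (f x) l = res (f y) l.
Hypothesis n_gt0 : (0 < n)%N.
Hypothesis f_fix_low : forall x, B x -> res (f x) (n - 1) = res x (n - 1).
Hypothesis f_period : forall x l, B x -> (n <= l)%N -> res (iter (Per l) f x) l = res x l.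
Hypothesis f_period_min : forall x l k, B x -> (n <= l)%N ->
  (0 < k < Per l)%N -> res (iter k f x) l <> res x l.

Local Notation orbit l i := [set iter j (fn f l) i | j : 'I_(Per l)].

Lemma iter_f_res x y l k : res x l = res y l -> res (iter k f x) l = res (iter k f y) l.
Proof. by move=> xy; elim: k => [|k IH] //=; apply: f_res. Qed.

Lemma fn_iter l (i : 'I_(2 ^ l)) k : iter k (fn f l) i = res (iter k f (Z2c i)) l :> nat.
Proof.
elim: k => [|k IH]; first by rewrite res_Z2c_ord.
by rewrite iterS /fn /=; apply: f_res; rewrite res_Z2c_ord IH.
Qed.

Lemma ball_iter x k : B x -> B (iter k f x).
Proof. by move=> Bx; elim: k => [|k IH] //=; rewrite /ball f_fix_low. Qed.

Lemma ball_Z2c_mod a b l : (n - 1 <= l)%N -> (a %% 2 ^ l = b %% 2 ^ l)%N ->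
  B (Z2c a) -> B (Z2c b).
Proof.
move=> le_l ab; rewrite /ball !res_Z2c => <-.
have dvd_l : (2 ^ (n - 1) %| 2 ^ l)%N by apply: dvdn_exp2l.
by rewrite -(modn_dvdm a dvd_l) ab modn_dvdm.
Qed.

Lemma Per_gt0 l : (0 < Per l)%N.
Proof. by rewrite muln_gt0 expn_gt0. Qed.

Lemma Per_leS l : (Per l <= Per l.+1)%N.
Proof. by rewrite leq_mul2r leq_pexp2l //; lia. Qed.

Lemma fn_iter_Per l (y : 'I_(2 ^ l)) : (n <= l)%N -> B (Z2c y) ->
  iter (Per l) (fn f l) y = y.
Proof. by move=> le_nl By; apply/val_inj; rewrite /= fn_iter f_period ?res_Z2c_ord. Qed.

Lemma fn_iter_inj l (i : 'I_(2 ^ l)) j j' : (n <= l)%N -> B (Z2c i) ->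
  (j < j' < Per l)%N -> iter j (fn f l) i <> iter j' (fn f l) i.
Proof.
move=> le_nl Bi jj' /(congr1 (@nat_of_ord _)); rewrite !fn_iter.
rewrite -(subnK (ltnW (proj1 (andP jj')))) iterD => /esym.
by apply: f_period_min; [apply: ball_iter | | lia].
Qed.

Lemma orbit_cycle l (i : 'I_(2 ^ l)) : (n <= l)%N -> B (Z2c i) ->
  is_cycle (fn f l) (orbit l i) (Per l).
Proof.
move=> le_nl Bi; exists i; split => //; first exact: Per_gt0.
- exact: fn_iter_Per.
- rewrite card_imset ?card_ord // => j j' E; apply/val_inj.
  by case: (ltngtP j j') => // jj'; exfalso;
    [apply: (fn_iter_inj le_nl Bi _ E) | apply: (fn_iter_inj le_nl Bi _ (esym E))];
    rewrite jj' ltn_ord.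
Qed.

Lemma orbit_mem l (y : 'I_(2 ^ l)) j : (n <= l)%N -> B (Z2c y) ->
  iter j (fn f l) y \in orbit l y.
Proof.
move=> le_nl By; rewrite (iter_modn _ (fn_iter_Per le_nl By)).
by apply/imsetP; exists (Ordinal (ltn_pmod j (Per_gt0 l))).
Qed.

Lemma fn_iter_modS l (y : 'I_(2 ^ l)) (y' : 'I_(2 ^ l.+1)) j : (y' %% 2 ^ l)%N = y ->
  (iter j (fn f l.+1) y' %% 2 ^ l)%N = iter j (fn f l) y.
Proof.
move=> y'y; rewrite !fn_iter -res_low //; apply: iter_f_res.
by rewrite res_Z2c res_Z2c_ord.
Qed.

Lemma lifts_iter_neq l (y : 'I_(2 ^ l)) j : (n <= l)%N -> B (Z2c y) -> (j < Per l.+1)%N ->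
  iter j (fn f l.+1) (lift_lo y) <> iter j (fn f l.+1) (lift_hi y).
Proof.
move=> le_nl By lt_j E; apply: (@lift_lo_hi_neq l y).
have le_n1 : (n - 1 <= l)%N by lia.
have Blo : B (Z2c (lift_lo y)) by apply: (ball_Z2c_mod le_n1 _ By); rewrite lift_lo_mod ?modn_small.
have Bhi : B (Z2c (lift_hi y)) by apply: (ball_Z2c_mod le_n1 _ By); rewrite lift_hi_mod ?modn_small.
rewrite -(fn_iter_Per (leqW le_nl) Blo) -(fn_iter_Per (leqW le_nl) Bhi).
by rewrite -(subnK (ltnW lt_j)) !iterD E.
Qed.

Lemma cycle_above (a b : 'I_(2 ^ n)) l (C : {set 'I_(2 ^ l)}) k :
  nat_of_ord a = res c0 n -> nat_of_ord b = res (f c0) n ->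
  (n <= l)%N -> is_cycle (fn f l) C k -> C \subset above n l [set a; b] ->
  exists2 y : 'I_(2 ^ l), B (Z2c y) & k = Per l /\ C = orbit l y.
Proof.
move=> Ea Eb le_nl [y [k_gt0 yk EC Ck]] /subsetP sub_C.
have By : B (Z2c y).
  have /sub_C : y \in C by rewrite EC; apply/imsetP; exists (Ordinal k_gt0).
  rewrite inE => /existsP [x /andP [+ /eqP Ex]]; rewrite /ball res_Z2c /=.
  have dvd_n : (2 ^ (n - 1) %| 2 ^ n)%N by apply: dvdn_exp2l; lia.
  rewrite -(modn_dvdm y dvd_n) -Ex !inE => /orP [] /eqP ->.
    by rewrite Ea -res_low // leq_subr.
  by rewrite Eb -res_low ?leq_subr // f_fix_low.
exists y => //; have k_Per : k = Per l.
  case: (ltngtP k (Per l)) => // lt_k.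
    exfalso; apply: (f_period_min By le_nl (k := k)); first by rewrite k_gt0 lt_k.
    by rewrite -fn_iter yk res_Z2c_ord.
  have : #|[set iter j (fn f l) y | j : 'I_k]| == #|'I_k| by rewrite -EC Ck card_ord.
  move/imset_injP => /(_ (Ordinal lt_k) (Ordinal k_gt0) isT isT).
  by rewrite /= fn_iter_Per // => /(_ erefl) [] /eqP; rewrite muln_eq0 expn_eq0.
by split => //; move: EC; rewrite k_Per.
Qed.

Lemma above_orbit l (y : 'I_(2 ^ l)) : (n <= l)%N -> B (Z2c y) ->
  above l l.+1 (orbit l y) = orbit l.+1 (lift_lo y) :|: orbit l.+1 (lift_hi y).
Proof.
move=> le_nl By; apply/setP => z; rewrite inE [in RHS]inE; apply/idP/idP.
  case/existsP => x /andP [/imsetP [j _ ->] /eqP Ex].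
  have lt_j : (j < Per l.+1)%N := leq_trans (ltn_ord j) (Per_leS l).
  have [] := two_lifts (ltn_ord (iter j (fn f l.+1) (lift_lo y)))
    (ltn_ord (iter j (fn f l.+1) (lift_hi y))) (ltn_ord z) _ _
    (fun E => lifts_iter_neq le_nl By lt_j (val_inj E)).
  - by rewrite (fn_iter_modS _ (lift_lo_mod y)) (fn_iter_modS _ (lift_hi_mod y)).
  - by rewrite (fn_iter_modS _ (lift_lo_mod y)) Ex.
  - by move=> Ez; apply/orP; left; apply/imsetP; exists (Ordinal lt_j) => //; apply: val_inj.
  - by move=> Ez; apply/orP; right; apply/imsetP; exists (Ordinal lt_j) => //; apply: val_inj.
case/orP => /imsetP [j _ ->]; apply/existsP; exists (iter j (fn f l) y).
  by rewrite orbit_mem //= (fn_iter_modS _ (lift_lo_mod y)).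
by rewrite orbit_mem //= (fn_iter_modS _ (lift_hi_mod y)).
Qed.

Lemma splits_orbit l (y : 'I_(2 ^ l)) : (n <= l)%N -> B (Z2c y) ->
  Per l.+1 = Per l -> splits f l (Per l) (orbit l y).
Proof.
move=> le_nl By Per_eq; have le_n1 : (n - 1 <= l)%N := leq_trans (leq_subr 1 n) le_nl.
have Blo : B (Z2c (lift_lo y)) by apply: (ball_Z2c_mod le_n1 _ By); rewrite lift_lo_mod ?modn_small.
have Bhi : B (Z2c (lift_hi y)) by apply: (ball_Z2c_mod le_n1 _ By); rewrite lift_hi_mod ?modn_small.
have cyc_lo := orbit_cycle (leqW le_nl) Blo; have cyc_hi := orbit_cycle (leqW le_nl) Bhi.
have above_eq := above_orbit le_nl By; have lifts_neq := lifts_iter_neq le_nl By.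
rewrite Per_eq in cyc_lo cyc_hi above_eq lifts_neq.
exists [set iter j (fn f l.+1) (lift_lo y) | j : 'I_(Per l)],
       [set iter j (fn f l.+1) (lift_hi y) | j : 'I_(Per l)]; split => //.
rewrite -setI_eq0; apply/eqP/setP => z; rewrite !inE.
apply/negP => /andP [/imsetP [j _ Ej] /imsetP [j' _ Ej']].
have /(congr1 (fun z : 'I_(2 ^ l.+1) => z %% 2 ^ l)%N) := etrans (esym Ej) Ej'.
rewrite /= (fn_iter_modS _ (lift_lo_mod y)) (fn_iter_modS _ (lift_hi_mod y)) => /val_inj.
have : #|orbit l y| == #|'I_(Per l)|.
  by have [_ [_ _ _ ->]] := orbit_cycle le_nl By; rewrite card_ord.
move/imset_injP => /(_ j j' isT isT) jj' /jj' jj'E; subst j'.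
by apply: (lifts_neq j (ltn_ord j)); rewrite -Ej -Ej'.
Qed.

Lemma grows_orbit l (y : 'I_(2 ^ l)) : (n <= l)%N -> B (Z2c y) ->
  Per l.+1 = (2 * Per l)%N -> grows f l (Per l) (orbit l y).
Proof.
move=> le_nl By Per_eq; have le_n1 : (n - 1 <= l)%N := leq_trans (leq_subr 1 n) le_nl.
have Blo : B (Z2c (lift_lo y)) by apply: (ball_Z2c_mod le_n1 _ By); rewrite lift_lo_mod ?modn_small.
have lt_Per : (Per l < Per l.+1)%N.
  by rewrite Per_eq mul2n -addnn -{1}[Per l]addn0 ltn_add2l Per_gt0.
have hi_lo : iter (Per l) (fn f l.+1) (lift_lo y) = lift_hi y.
  have lo_hi_mod : (lift_lo y %% 2 ^ l = lift_hi y %% 2 ^ l)%N.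
    by rewrite lift_lo_mod lift_hi_mod.
  have it_mod : (iter (Per l) (fn f l.+1) (lift_lo y) %% 2 ^ l = lift_lo y %% 2 ^ l)%N.
    by rewrite (fn_iter_modS _ (lift_lo_mod y)) fn_iter_Per // lift_lo_mod.
  have [E|E] := two_lifts (ltn_ord (lift_lo y)) (ltn_ord (lift_hi y)) (ltn_ord _)
    lo_hi_mod it_mod (fun E => @lift_lo_hi_neq l y (val_inj E)); last exact: val_inj.
  exfalso; apply: (fn_iter_inj (leqW le_nl) Blo (j := 0) (j' := Per l)).
    by rewrite Per_gt0 lt_Per.
  exact: val_inj.
have hi_sub : orbit l.+1 (lift_hi y) \subset orbit l.+1 (lift_lo y).
  apply/subsetP => z /imsetP [j _ ->]; rewrite -hi_lo -iterD.
  exact: orbit_mem (leqW le_nl) Blo.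
rewrite /grows (above_orbit le_nl By) (setUidPl hi_sub) -Per_eq.
exact: orbit_cycle (leqW le_nl) Blo.
Qed.

Lemma splits_then_grows_above (a b : 'I_(2 ^ n)) :
  nat_of_ord a = res c0 n -> nat_of_ord b = res (f c0) n ->
  splits_then_grows f n s [set a; b].
Proof.
move=> Ea Eb l C k le_nl cycC subC.
have [y By [-> ->]] := cycle_above Ea Eb le_nl cycC subC.
case: (ltnP l (n + s)) => l_ns; split => // _.
- apply: splits_orbit => //.
  have /eqP -> : (l.+1 - (n + s) == 0)%N by rewrite subn_eq0.
  by have /eqP -> : (l - (n + s) == 0)%N by rewrite subn_eq0 ltnW.
- by apply: grows_orbit => //; rewrite subSn // expnS mulnA.
Qed.

Lemma typeII_ball : typeII f s B.
Proof.
have Bc0 : B c0 by [].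
have Per_n : Per n = 2 by rewrite (_ : n - (n + s) = 0)%N //; lia.
have fc0_low : res (f c0) (n - 1) = res c0 (n - 1) := f_fix_low Bc0.
have fc0_neq : res (f c0) n <> res c0 n.
  by apply: (f_period_min (k := 1) Bc0) => //; rewrite Per_n.
have En : n = (n - 1).+1 by lia.
exists n, c0, (f c0); split.
  move=> z; rewrite /ball; split => [Ez | [] Ez]; last 2 first.
  - by rewrite (res_low z (leq_subr 1 n)) Ez -res_low ?leq_subr.
  - by rewrite (res_low z (leq_subr 1 n)) Ez -res_low ?leq_subr.
  have := @two_lifts (n - 1) (res c0 n) (res (f c0) n) (res z n).
  rewrite -En !res_lt -!res_low ?leq_subr // fc0_low Ez => /(_ isT isT isT erefl erefl).
  by case/(_ (fun E => fc0_neq (esym E))) => ->; [left | right].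
set a : 'I_(2 ^ n) := Ordinal (res_lt c0 n).
set b : 'I_(2 ^ n) := Ordinal (res_lt (f c0) n).
have fn_ab : fn f n a = b by apply/val_inj; apply: f_res; rewrite res_Z2c_ord.
split; last exact: splits_then_grows_above.
exists a; split => //.
- have Ba : B (Z2c a) by rewrite /ball res_Z2c /= -res_low // leq_subr.
  by have := fn_iter_Per (leqnn n) Ba; rewrite Per_n.
- apply/setP => y; rewrite !inE; apply/orP/imsetP.
    by case=> /eqP ->; [exists ord0 | exists (Ordinal (isT : (1 < 2)%N)) => //=; rewrite fn_ab].
  by case=> -[[|[|j]]] //= _ _ ->; [left | right; rewrite fn_ab].
- rewrite cards2; case: eqP => // /(congr1 (@nat_of_ord _)) /= E.
  by case: fc0_neq.
Qed.

End ExactPeriods.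

(** * The pieces of type II *)

Lemma v2z_res m v l : v2_is m v -> v2z_is (res m (l + v.+1))%:Z v.
Proof.
case=> m_v m_vS; set M := (res m (l + v.+1))%:Z.
have mM k : (k <= l + v.+1)%N -> rep k m M by move/(rep_low (rep_res _ m)).
apply: v2zP.
  have := rep_dvdz (mM v _) (_ : rep v m 0); rewrite subr0; apply; first lia.
  by rewrite /rep m_v res_Z2c mod0n subrr dvdz0.
move=> /dvdzP [q EM]; apply: m_vS; apply: (rep_res_eq (mM v.+1 _)); first lia.
by apply: rep_congr (rep_Z2c _ 0) _; rewrite sub0r rpredN EM dvdz_mull.
Qed.

(* At level [l], [m] is represented to precision [l + v + 1], so that the
   representative keeps the valuation [v] of [m]. *)
Lemma typeII_fm m v (c0 : Z2) (j s : nat) (S : int -> int -> Prop) :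
  v2_is m v ->
  (forall M, v2z_is M v -> [/\ {homo fz M : Y / S M Y},
       exact_shift (S M) (iter 2 (fz M)) (dfz2 M) (j.+2 + s)
     & forall Y, S M Y -> v2z_is (fz M Y - Y) j.+1]) ->
  (forall x l, ball c0 j.+1 x -> (j.+1 <= l)%N -> S (res m (l + v.+1))%:Z (res x l)%:Z) ->
  typeII (fm m) s (ball c0 j.+1).
Proof.
move=> m_v shiftS memS.
have setup x l : ball c0 j.+1 x -> (j.+1 <= l)%N ->
    let M := (res m (l + v.+1))%:Z in
    [/\ rep l m M, S M (res x l)%:Z, {homo fz M : Y / S M Y},
        exact_shift (S M) (iter 2 (fz M)) (dfz2 M) (j.+2 + s)
      & forall Y, S M Y -> v2z_is (fz M Y - Y) j.+1].
  move=> Bx jl M; have [fS sh shift1] := shiftS M (v2z_res l m_v).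
  by split => //; [apply: (rep_low (rep_res _ m)); lia | apply: memS].
apply: (typeII_ball (n := j.+2)) => //.
- exact: fm_res.
- move=> x Bx; have [mM SX _ _ shift1] := setup x j.+1 Bx (leqnn _).
  apply: (rep_res_eq _ (rep_res _ x)).
  exact: rep_congr (rep_fm mM (rep_res _ x)) (v2z_dvdz (shift1 _ SX)).
- move=> x l Bx jl; have [mM SX fS sh shift1] := setup x l Bx (ltnW jl).
  have [per _] := exact_period fS sh shift1 (ltn_addr s (ltnSn j.+1)) jl SX.
  exact: rep_res_eq (rep_congr (rep_iter_fm _ mM (rep_res l x)) per) (rep_res l x).
- move=> x l k Bx jl lt_k E; have [mM SX fS sh shift1] := setup x l Bx (ltnW jl).
  have [_ min] := exact_period fS sh shift1 (ltn_addr s (ltnSn j.+1)) jl SX.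
  apply: (min k lt_k); apply: (rep_dvdz (rep_iter_fm k mM (rep_res l x))).
  by rewrite /rep E; apply: rep_res.
Qed.

Definition pm (m : Z2) := Z2add (Z2mul (Z2c 4) m) (Z2c 2).

Lemma rep_pm k m M : rep k m M -> rep k (pm m) (pz M).
Proof.
move=> mM; apply: rep_congr (rep_add (rep_mul (rep_Z2c k 4) mM) (rep_Z2c k 2)) _.
by rewrite /pz (_ : _ - _ = 0) ?dvdz0 //; ring.
Qed.

Lemma rep_pow2 k j : rep k (Z2c (2 ^ j)) (2 ^+ j).
Proof. by rewrite -natz_pow2; apply: rep_Z2c. Qed.

Lemma rep_pm_pow2 k m M j : rep k m M -> rep k (Z2add (pm m) (Z2c (2 ^ j))) (pz M + 2 ^+ j).
Proof. by move=> mM; apply: rep_add (rep_pm mM) (rep_pow2 k j). Qed.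

Lemma typeII_near_p m v n : v2_is m v -> odd v -> (4 <= n)%N ->
  typeII (fm m) 1 (ball (Z2add (pm m) (Z2c (2 ^ (n - 2)))) (n - 1)).
Proof.
move=> m_v odd_v le4n; set j := (n - 2)%N.
have -> : (n - 1 = j.+1)%N by rewrite /j; lia.
apply: (typeII_fm (S := fun M Y => v2z_is (Y - pz M) j) m_v).
  move=> M vM; have [] := fz_shift_near_p vM odd_v (_ : (2 <= j)%N); first by rewrite /j; lia.
  by rewrite (_ : j + 3 = j.+2 + 1)%N //; lia.
move=> x l Bx jl; set M := (res m (l + v.+1))%:Z.
have xX : rep j.+1 x (res x l) by apply: (rep_low (rep_res _ x)).
have mM : rep j.+1 m M by apply: (rep_low (rep_res _ m)); lia.
have := (ball_rep (rep_pm_pow2 j mM) xX).1 Bx.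
rewrite (_ : _ - _ = ((res x l)%:Z - pz M) - 2 ^+ j); last ring.
move=> d; rewrite (_ : _ - _ = 2 ^+ j + ((res x l)%:Z - pz M - 2 ^+ j)); last ring.
exact: v2zDr (v2z_pow2 j) d.
Qed.

Lemma typeII_near_0 m v n : v2_is m v -> odd v -> (4 <= n)%N ->
  typeII (fm m) (if (n <= v./2 + 3)%N then 2 * n - 5 else v + 1)%N
    (ball (Z2c (2 ^ (n - 2))) (n - 1)).
Proof.
move=> m_v odd_v le4n; set j := (n - 2)%N.
have -> : (n - 1 = j.+1)%N by rewrite /j; lia.
apply: (typeII_fm (S := fun M Y => v2z_is Y j) m_v).
  move=> M vM; have j2 : (2 <= j)%N by rewrite /j; lia.
  have [fS sh shift1] := fz_shift_near_0 vM odd_v j2; split => //.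
  suff -> : (j.+2 + (if (n <= v./2 + 3)%N then 2 * n - 5 else v + 1) =
             if (j + j < v + 2)%N then 3 * j + 1 else j + v + 3)%N by [].
  have v_half : v = (v./2 * 2).+1 by rewrite -[LHS]odd_double_half odd_v -muln2.
  by rewrite /j; do 2 case: ifP; lia.
move=> x l Bx jl.
have xX : rep j.+1 x (res x l) by apply: (rep_low (rep_res _ x)).
have := (ball_rep (rep_pow2 j.+1 j) xX).1 Bx => d.
rewrite (_ : _%:Z = 2 ^+ j + ((res x l)%:Z - 2 ^+ j)); last ring.
exact: v2zDr (v2z_pow2 j) d.
Qed.

(** * The partition of 2Z_2 *)

Lemma v2z_subP D j : v2z_is D j <-> (2 ^+ j.+1 %| D - 2 ^+ j)%Z.
Proof.
split => [[q ->] | /dvdzP [r Er]]; first by apply/dvdzP; exists q; rewrite exprS; ring.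
by exists r; rewrite -(subrK (2 ^+ j) D) Er exprS; ring.
Qed.

Definition dist2_is (u x : Z2) (j : nat) := ball u j x /\ ~ ball u j.+1 x.

Lemma ball0 u x : ball u 0 x.
Proof. by rewrite /ball; have := res_lt x 0; have := res_lt u 0; rewrite expn0; lia. Qed.

Lemma dist2_unique u x j j' : dist2_is u x j -> dist2_is u x j' -> j = j'.
Proof.
have lt_false a b : dist2_is u x a -> dist2_is u x b -> ~ (a < b)%N.
  by move=> [_ na] [ub _] ab; apply: na; apply: ball_low ub ab.
move=> dj dj'; case: (ltngtP j j') => // ?; exfalso.
  exact: lt_false dj dj' _.
exact: lt_false dj' dj _.
Qed.

Lemma dist2_exists u x : x <> u -> exists j, dist2_is u x j.
Proof.
move=> xu; have [k nk] : exists k, res x k != res u k.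
  apply: NNPP => all_eq; apply: xu; apply: Z2_ext => k.
  by apply/eqP; apply: NNPP => nk; apply: all_eq; exists k; apply/negP.
have [k0 nk0 min0] := ex_minnP (ex_intro (fun k => res x k != res u k) k nk).
have k0_gt0 : (0 < k0)%N by case: k0 nk0 {min0} => // /eqP; case; apply: ball0.
exists k0.-1; rewrite /dist2_is prednK //; split; last exact/eqP.
case E: (res x k0.-1 == res u k0.-1); first exact/eqP.
by have := min0 _ (negbT E); lia.
Qed.

Lemma dist2_v2z u x j k U X : dist2_is u x j -> (j < k)%N -> rep k u U -> rep k x X ->
  v2z_is (X - U) j.
Proof.
move=> [uj nuj] jk uU xX; apply: v2zP.
  by apply/(ball_rep (rep_low uU _) (rep_low xX _)) => //; apply: ltnW.
by move/(ball_rep (rep_low uU jk) (rep_low xX jk)).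
Qed.

Lemma dist2_shift_pow2 u c x j U : rep j.+1 u U -> rep j.+1 c (U + 2 ^+ j) ->
  ball c j.+1 x <-> dist2_is u x j.
Proof.
move=> uU cU; have xX := rep_res j.+1 x; set X := (res x j.+1)%:Z.
have uUj := rep_low uU (leqnSn j); have xXj := rep_low xX (leqnSn j).
rewrite (ball_rep cU xX) (_ : X - _ = (X - U) - 2 ^+ j); last ring.
rewrite -v2z_subP /dist2_is (ball_rep uUj xXj) (ball_rep uU xX).
split => [vXU | [jXU nXU]]; last exact: v2zP.
by split; [apply: v2z_dvdz | apply: v2z_ndvdz].
Qed.

Lemma res_Z2c0 k : res (Z2c 0) k = 0%N.
Proof. by rewrite res_Z2c mod0n. Qed.

Lemma rep_Z2c0 k : rep k (Z2c 0) 0.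
Proof. exact: rep_Z2c. Qed.

Lemma res_pm2 m : res (pm m) 2 = 2%N.
Proof.
apply: (rep_res_eq _ (rep_Z2c 2 2)); apply: rep_congr (rep_pm (rep_res 2 m)) _.
by apply/dvdzP; exists (res m 2)%:Z; rewrite /pz; ring.
Qed.

Lemma pm_even m : ball (Z2c 0) 1 (pm m).
Proof. by rewrite /ball (res_low _ (isT : (1 <= 2)%N)) res_pm2. Qed.

Lemma ball_pm_pow2 m x n : (2 <= n)%N ->
  ball (Z2add (pm m) (Z2c (2 ^ (n - 2)))) (n - 1) x <-> dist2_is (pm m) x (n - 2).
Proof.
move=> le2n; rewrite (_ : n - 1 = (n - 2).+1)%N; last lia.
exact: dist2_shift_pow2 (rep_pm (rep_res _ m)) (rep_pm_pow2 _ (rep_res _ m)).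
Qed.

Lemma ball_pow2 x n : (2 <= n)%N ->
  ball (Z2c (2 ^ (n - 2))) (n - 1) x <-> dist2_is (Z2c 0) x (n - 2).
Proof.
move=> le2n; rewrite (_ : n - 1 = (n - 2).+1)%N; last lia.
by apply: dist2_shift_pow2 (rep_Z2c0 _) _; rewrite add0r; apply: rep_pow2.
Qed.

Lemma fm_fixed m x : fm m x = x <-> x = Z2c 0 \/ x = pm m.
Proof.
split => [fx | [->|->]]; last 2 first.
- apply: Z2_ext => k; apply: (rep_res_eq _ (rep_Z2c0 k)).
  by apply: rep_congr (rep_fm (rep_res k m) (rep_Z2c0 k)) _; rewrite /fz mul0r subrr dvdz0.
- apply: Z2_ext => k; have pP := rep_pm (rep_res k m); apply: (rep_res_eq _ pP).
  by apply: rep_congr (rep_fm (rep_res k m) pP) _; rewrite fz_sub subrr mulr0 dvdz0.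
case: (classic (x = Z2c 0)) => [|x_n0]; first by left.
case: (classic (x = pm m)) => [|x_np]; first by right.
have [j d0] := dist2_exists x_n0; have [j' dp] := dist2_exists x_np.
set k := (j + j').+1; have mM := rep_res k m; have xX := rep_res k x.
have jk : (j < k)%N by rewrite /k; lia.
have j'k : (j' < k)%N by rewrite /k; lia.
have vX := dist2_v2z d0 jk (rep_Z2c0 k) xX; rewrite subr0 in vX.
have vXp := dist2_v2z dp j'k (rep_pm mM) xX.
exfalso; apply: (v2z_ndvdz (v2zM vX vXp)); rewrite -fz_sub.
by apply: (rep_dvdz _ xX); rewrite -{1}fx; exact: rep_fm mM xX.
Qed.

Lemma fm_odd_even m x : ball (Z2c 1) 1 x -> ball (Z2c 0) 1 (fm m x).
Proof.
move=> x_odd; have x1 : res x 1 = 1%N by rewrite x_odd.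
apply: (rep_res_eq _ (rep_Z2c0 1)).
apply: rep_congr (rep_fm (rep_res 1 m) (rep_res 1 x)) _; rewrite x1 /fz.
by apply/dvdzP; exists (- 2 * (res m 1)%:Z); ring.
Qed.

Lemma pm_neq0 m : Z2c 0 <> pm m.
Proof. by move/(congr1 (res^~ 2)); rewrite res_Z2c0 res_pm2. Qed.

Local Notation Apiece m n := (ball (Z2add (pm m) (Z2c (2 ^ (n - 2)))) (n - 1)).
Local Notation Bpiece n := (ball (Z2c (2 ^ (n - 2))) (n - 1)).

Lemma ball_pm_not0 m x : ball (pm m) 2 x -> ~ ball (Z2c 0) 2 x.
Proof. by rewrite /ball => ->; rewrite res_pm2 res_Z2c0. Qed.

Lemma dist2_ball2 u x j : dist2_is u x j -> (2 <= j)%N -> ball u 2 x.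
Proof. by case=> ux _; apply: ball_low. Qed.

Lemma even_partition m x :
  ball (Z2c 0) 1 x <->
  [\/ x = Z2c 0, x = pm m, exists2 n, (4 <= n)%N & Apiece m n x
    | exists2 n, (4 <= n)%N & Bpiece n x].
Proof.
split => [x_even | ]; last first.
  have dist2_even u y j : ball (Z2c 0) 1 u -> dist2_is u y j -> (1 <= j)%N -> ball (Z2c 0) 1 y.
    by move=> u_even [uy _] j1; rewrite /ball (ball_low uy j1).
  case=> [-> | -> | [n n4 /(ball_pm_pow2 _ _ (ltnW (ltnW n4))) dn]
              | [n n4 /(ball_pow2 _ (ltnW (ltnW n4))) dn]] //.
  - by apply: dist2_even (pm_even m) dn _; lia.
  - by apply: dist2_even _ dn _ => //; lia.
case: (classic (x = Z2c 0)) => [|x_n0]; first by constructor 1.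
have [j d0] := dist2_exists x_n0.
have j1 : (1 <= j)%N by case: j d0 => // -[_]; case.
case: (leqP 2 j) => [j2 | j_lt2].
  by constructor 4; exists j.+2 => //; apply/ball_pow2 => //; rewrite subn2.
have x_p : ball (pm m) 2 x.
  have j_eq : j = 1%N by lia.
  rewrite j_eq in d0; case: d0 => x1 nx2; rewrite /ball res_pm2.
  have := res_lt x 2; have := res_low x (isT : (1 <= 2)%N).
  by move: x1 nx2; rewrite /ball !res_Z2c0; lia.
case: (classic (x = pm m)) => [|x_np]; first by constructor 2.
have [j' dp] := dist2_exists x_np.
have j'2 : (2 <= j')%N.
  by case: leqP => // j'_lt2; case: dp => _; case; apply: ball_low x_p _.
by constructor 3; exists j'.+2 => //; apply/ball_pm_pow2 => //; rewrite subn2.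
Qed.

Lemma pieces_avoid_fixed m n : (4 <= n)%N ->
  [/\ ~ Apiece m n (Z2c 0), ~ Apiece m n (pm m), ~ Bpiece n (Z2c 0) & ~ Bpiece n (pm m)].
Proof.
move=> n4; have n2 : (2 <= n)%N by lia.
have j2 : (2 <= n - 2)%N by lia.
split.
- by move/(ball_pm_pow2 _ _ n2)/dist2_ball2/(_ j2)/ball_pm_not0; apply.
- by move/(ball_pm_pow2 _ _ n2) => -[_]; apply.
- by move/(ball_pow2 _ n2) => -[_]; apply.
- by move/(ball_pow2 _ n2)/dist2_ball2/(_ j2); apply: ball_pm_not0.
Qed.

Lemma piecesA_disjoint m n n' x : (4 <= n)%N -> (4 <= n')%N -> n <> n' ->
  ~ (Apiece m n x /\ Apiece m n' x).
Proof.
move=> n4 n'4 nn' [/(ball_pm_pow2 _ _ (ltnW (ltnW n4))) dn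
                   /(ball_pm_pow2 _ _ (ltnW (ltnW n'4))) dn'].
by have := dist2_unique dn dn'; lia.
Qed.

Lemma piecesB_disjoint n n' x : (4 <= n)%N -> (4 <= n')%N -> n <> n' ->
  ~ (Bpiece n x /\ Bpiece n' x).
Proof.
move=> n4 n'4 nn' [/(ball_pow2 _ (ltnW (ltnW n4))) dn /(ball_pow2 _ (ltnW (ltnW n'4))) dn'].
by have := dist2_unique dn dn'; lia.
Qed.

Lemma piecesAB_disjoint m n n' x : (4 <= n)%N -> (4 <= n')%N ->
  ~ (Apiece m n x /\ Bpiece n' x).
Proof.
move=> n4 n'4 [/(ball_pm_pow2 _ _ (ltnW (ltnW n4))) dn /(ball_pow2 _ (ltnW (ltnW n'4))) dn'].
apply: ball_pm_not0 (dist2_ball2 dn _) (dist2_ball2 dn' _); lia.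
Qed.

Lemma exists2_split_at (P : nat -> Prop) a N : (a <= N.+1)%N ->
  (exists2 n, (a <= n)%N & P n) <->
  (exists2 n, (a <= n <= N)%N & P n) \/ (exists2 n, (N < n)%N & P n).
Proof.
move=> aN; split => [[n an Pn] | [[n /andP [an _] Pn] | [n Nn Pn]]].
- by case: (leqP n N) => nN; [left | right]; exists n; rewrite ?an.
- by exists n.
- by exists n => //; apply: leq_trans aN Nn.
Qed.

Local Close Scope ring_scope.

Theorem theorem6p4 (m : Z2) (v : nat) :
  v2_is m v -> odd v ->
  let f := fm m in
  let p := Z2add (Z2mul (Z2c 4) m) (Z2c 2) in                 (* 4m+2 *)
  let A := fun n : nat => ball (Z2add p (Z2c (2 ^ (n - 2)))) (n - 1) in
                                         (* 4m+2+2^(n-2)+2^(n-1)Z_2 *)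
  let B := fun n : nat => ball (Z2c (2 ^ (n - 2))) (n - 1) in
                                         (* 2^(n-2)+2^(n-1)Z_2 *)
  let N := v./2 + 3 in                   (* floor(v_2(m)/2) + 3 *)
  (* the fixed points of f are exactly 0 and 4m+2 *)
  (forall x, f x = x <-> x = Z2c 0 \/ x = p) /\
  (* f(1 + 2Z_2) is contained in 2Z_2 *)
  (forall x, ball (Z2c 1) 1 x -> ball (Z2c 0) 1 (f x)) /\
  (* 2Z_2 = {0, 4m+2} u E_1 u E_2 u E_3 ... *)
  (forall x, ball (Z2c 0) 1 x <->
     (x = Z2c 0 \/ x = p \/
      (exists2 n, 4 <= n & A n x) \/
      (exists2 n, 4 <= n <= N & B n x) \/
      (exists2 n, N < n & B n x))) /\
  (* ... and all the pieces are pairwise disjoint *)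
  Z2c 0 <> p /\
  (forall n, 4 <= n -> [/\ ~ A n (Z2c 0), ~ A n p, ~ B n (Z2c 0) & ~ B n p]) /\
  (forall n n' x, 4 <= n -> 4 <= n' -> n <> n' -> ~ (A n x /\ A n' x)) /\
  (forall n n' x, 4 <= n -> 4 <= n' -> n <> n' -> ~ (B n x /\ B n' x)) /\
  (forall n n' x, 4 <= n -> 4 <= n' -> ~ (A n x /\ B n' x)) /\
  (* types of the pieces *)
  (forall n, 4 <= n -> typeII f 1 (A n)) /\
  (forall n, 4 <= n <= N -> typeII f (2 * n - 5) (B n)) /\
  (forall n, N < n -> typeII f (v + 1) (B n)).
Proof.
move=> m_v odd_v f p A B N.
have N4 : 4 <= N.+1 by rewrite /N; lia.
split; first exact: fm_fixed.
split; first exact: fm_odd_even.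
split.
  move=> x; have [to_split of_split] := exists2_split_at (B^~ x) N4.
  split => [/(even_partition m) [] | x_pieces]; last apply/(even_partition m).
  - by left.
  - by right; left.
  - by right; right; left.
  - by move/to_split; right; right; right.
  case: x_pieces => [|[|[|/of_split]]];
    by [constructor 1 | constructor 2 | constructor 3 | constructor 4].
split; first exact: pm_neq0.
split; first exact: pieces_avoid_fixed.
split; first exact: piecesA_disjoint.
split; first exact: piecesB_disjoint.
split; first exact: piecesAB_disjoint.
split; first by move=> n; apply: typeII_near_p m_v odd_v.
split.
  by move=> n /andP [n4 nN]; have := typeII_near_0 m_v odd_v n4; rewrite -/N nN.
move=> n Nn; have n4 : 4 <= n by rewrite (leq_trans N4).
by have := typeII_near_0 m_v odd_v n4; rewrite -/N leqNgt Nn.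
Qed.
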